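(* Let $K\geqslant 1$ and $f\in\mathrm{HQR}_K(\mathbb{U},\mathbb{S})$. Then $$d_{\mathbb{S}}(f(z_1),f(z_2))\leqslant K\, d_{\mathbb{U}}(z_1,z_2)\quad\text{for all } z_1,z_2\in\mathbb{U}.$$
   Context: $\mathbb{U}=\{z\in\mathbb{C}:|z|<1\}$, $\mathbb{S}=\{z\in\mathbb{C}:-1<\operatorname{Re} z<1\}$. For a hyperbolic domain $\Omega$ with density $\rho_\Omega$, $d_\Omega(z_1,z_2)=\inf_\gamma\int_\gamma\rho_\Omega(z)|dz|$ over $C^1$ curves in $\Omega$ joining $z_1$ to $z_2$; here $\rho_{\mathbb{U}}(z)=\frac{2}{1-|z|^2}$ and $\rho_{\mathbb{S}}(z)=\frac{\pi}{2}\big/\cos\left(\frac{\pi}{2}\operatorname{Re} z\right)$. For domains $D,G\subset\mathbb{C}$, $\mathrm{HQR}_K(D,G)$ denotes the class of complex-valued harmonic $C^1$ maps $f:D\to G$ that are sense-preserving $K$-quasiregular, i.e. $|f_z(z)|>|f_{\bar z}(z)|$ and $\frac{|f_z(z)|+|f_{\bar z}(z)|}{|f_z(z)|-|f_{\bar z}(z)|}\leqslant K$ for all $z\in D$. *)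

From Stdlib Require Import Reals.
From Coquelicot Require Import Coquelicot.
Open Scope R_scope.

Definition px (g : R -> R -> R) (x y : R) : R := Derive (fun t => g t y) x.
Definition py (g : R -> R -> R) (x y : R) : R := Derive (fun t => g x t) y.

Definition C1_at (g : R -> R -> R) (p : R * R) : Prop :=
  ex_derive (fun t => g t (snd p)) (fst p) /\
  ex_derive (fun t => g (fst p) t) (snd p) /\
  continuous (fun q : R * R => g (fst q) (snd q)) p /\
  continuous (fun q : R * R => px g (fst q) (snd q)) p /\
  continuous (fun q : R * R => py g (fst q) (snd q)) p.

Definition ReF (f : C -> C) (x y : R) : R := fst (f (x, y)).
Definition ImF (f : C -> C) (x y : R) : R := snd (f (x, y)).

Definition harmonic_real_on (D : C -> Prop) (g : R -> R -> R) : Prop :=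
  forall p : C, D p ->
    C1_at g p /\ C1_at (px g) p /\ C1_at (py g) p /\
    px (px g) (fst p) (snd p) + py (py g) (fst p) (snd p) = 0.

Definition harmonic_on (D : C -> Prop) (f : C -> C) : Prop :=
  harmonic_real_on D (ReF f) /\ harmonic_real_on D (ImF f).

(* Wirtinger derivatives f_z = (f_x - i f_y)/2, f_zbar = (f_x + i f_y)/2 *)
Definition f_z (f : C -> C) (z : C) : C :=
  let ux := px (ReF f) (fst z) (snd z) in let uy := py (ReF f) (fst z) (snd z) in
  let vx := px (ImF f) (fst z) (snd z) in let vy := py (ImF f) (fst z) (snd z) in
  ((ux + vy) / 2, (vx - uy) / 2).
Definition f_zbar (f : C -> C) (z : C) : C :=
  let ux := px (ReF f) (fst z) (snd z) in let uy := py (ReF f) (fst z) (snd z) in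
  let vx := px (ImF f) (fst z) (snd z) in let vy := py (ImF f) (fst z) (snd z) in
  ((ux - vy) / 2, (vx + uy) / 2).

Definition HQR (K : R) (D G : C -> Prop) (f : C -> C) : Prop :=
  (forall z, D z -> G (f z)) /\
  harmonic_on D f /\
  (forall z, D z ->
     Cmod (f_z f z) > Cmod (f_zbar f z) /\
     (Cmod (f_z f z) + Cmod (f_zbar f z)) / (Cmod (f_z f z) - Cmod (f_zbar f z)) <= K).

Definition unit_disk (z : C) : Prop := Cmod z < 1.
Definition strip (z : C) : Prop := -1 < fst z < 1.

Definition rho_U (z : C) : R := 2 / (1 - (Cmod z) ^ 2).
Definition rho_S (z : C) : R := (PI / 2) / cos (PI / 2 * fst z).

(* C^1 curves gamma : [0,1] -> Om joining z1 to z2 (gamma is given on R;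
   differentiability with continuous derivative is required at each t in [0,1]) *)
Definition C1_curve (Om : C -> Prop) (g : R -> C) (z1 z2 : C) : Prop :=
  g 0 = z1 /\ g 1 = z2 /\
  (forall t, 0 <= t <= 1 -> Om (g t)) /\
  (forall t, 0 <= t <= 1 ->
     ex_derive (fun s => fst (g s)) t /\ ex_derive (fun s => snd (g s)) t /\
     continuous (fun s => Derive (fun r => fst (g r)) s) t /\
     continuous (fun s => Derive (fun r => snd (g r)) s) t).

Definition curve_deriv (g : R -> C) (t : R) : C :=
  (Derive (fun r => fst (g r)) t, Derive (fun r => snd (g r)) t).

Definition curve_length (rho : C -> R) (g : R -> C) : R :=
  RInt (fun t => rho (g t) * Cmod (curve_deriv g t)) 0 1.

Definition hdist (rho : C -> R) (Om : C -> Prop) (z1 z2 : C) : Rbar :=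
  Glb_Rbar (fun L => exists g, C1_curve Om g z1 z2 /\ L = curve_length rho g).

Definition d_U := hdist rho_U unit_disk.
Definition d_S := hdist rho_S strip.

(* Let u = Re f: it is harmonic on the disk with values in (-1, 1), and the heart of the
   matter is the Schwarz lemma for such functions,
     (1 - |z|^2) PI |grad u(z)| <= 4 cos (PI u(z) / 2).
   To prove it at z in a direction e, compose u with the disk automorphism sending 0 to z and
   pass to polar coordinates rotated by e. The result U(r, t) is harmonic, so its Fourier
   coefficients M(r) = int U(r, t) dt and Phi(r) = int U(r, t) cos t dt solve the Euler
   equations r^2 M'' + r M' = 0 and r^2 Phi'' + r Phi' - Phi = 0. Hence M = 2 PI u(z) and
   Phi(r) = r Phi'(0), with Phi'(0) = PI (1 - |z|^2) grad u(z) . e. As |U| < 1 on each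
   circle, where its mean is u(z), a bathtub argument bounds Phi(r) by 4 cos (PI u(z) / 2).
   Quasiregularity gives |f_z| + |f_zbar| <= K |grad u|, so
   rho_S(f) (|f_z| + |f_zbar|) <= K rho_U: the rho_S-length of f o gamma is at most K times
   the rho_U-length of gamma, and the claim follows by taking infima over curves. *)

From Stdlib Require Import Reals Lra Psatz.
From Coquelicot Require Import Coquelicot.
Open Scope R_scope.

(** * Continuity, derivatives and integrals of real functions *)

Section RealContinuity.
Context {U : UniformSpace}.
Implicit Types (f g : U -> R) (x : U).

Lemma continuous_R_plus f g x :
  continuous f x -> continuous g x -> continuous (fun y => f y + g y) x.
Proof. apply (continuous_plus (V := R_NormedModule)). Qed.

Lemma continuous_R_mult f g x :
  continuous f x -> continuous g x -> continuous (fun y => f y * g y) x.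
Proof. intros; apply (continuous_mult f g); auto. Qed.

Lemma continuous_R_opp f x : continuous f x -> continuous (fun y => - f y) x.
Proof. apply (continuous_opp (V := R_NormedModule)). Qed.

Lemma continuous_R_minus f g x :
  continuous f x -> continuous g x -> continuous (fun y => f y - g y) x.
Proof. apply (continuous_minus (V := R_NormedModule)). Qed.

Lemma continuous_R_comp f (h : R -> R) x :
  continuous f x -> continuous h (f x) -> continuous (fun y => h (f y)) x.
Proof. intros; apply (continuous_comp f h); auto. Qed.

Lemma continuous_R_inv f x : continuous f x -> f x <> 0 -> continuous (fun y => / f y) x.
Proof.
  intros Hf Hx; apply (continuous_R_comp f Rinv); [exact Hf |].
  apply (continuous_Rinv_comp id); [apply continuous_id | exact Hx].
Qed.

Lemma continuous_R_div f g x :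
  continuous f x -> continuous g x -> g x <> 0 -> continuous (fun y => f y / g y) x.
Proof. intros; apply continuous_R_mult, continuous_R_inv; auto. Qed.

Lemma continuous_R_pow f n x : continuous f x -> continuous (fun y => f y ^ n) x.
Proof.
  intros Hf; induction n as [| n IH]; simpl.
  - apply continuous_const.
  - apply continuous_R_mult; auto.
Qed.

Lemma continuous_R_cos f x : continuous f x -> continuous (fun y => cos (f y)) x.
Proof. intros Hf; apply continuous_R_comp; [exact Hf | apply continuous_cos]. Qed.

Lemma continuous_R_sin f x : continuous f x -> continuous (fun y => sin (f y)) x.
Proof. intros Hf; apply continuous_R_comp; [exact Hf | apply continuous_sin]. Qed.

Lemma continuous_R_sqrt f x : continuous f x -> continuous (fun y => sqrt (f y)) x.
Proof. intros Hf; apply continuous_R_comp; [exact Hf | apply continuous_sqrt]. Qed.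

End RealContinuity.

Lemma continuous_R2_fst (p : R * R) : continuous (fun q : R * R => fst q) p.
Proof. destruct p; apply continuous_fst. Qed.

Lemma continuous_R2_snd (p : R * R) : continuous (fun q : R * R => snd q) p.
Proof. destruct p; apply continuous_snd. Qed.

Ltac auto_cont_step :=
  match goal with
  | |- continuous (fun y => @?f y + @?g y) _ => apply (continuous_R_plus f g)
  | |- continuous (fun y => @?f y - @?g y) _ => apply (continuous_R_minus f g)
  | |- continuous (fun y => - @?f y) _ => apply (continuous_R_opp f)
  | |- continuous (fun y => @?f y * @?g y) _ => apply (continuous_R_mult f g)
  | |- continuous (fun y => @?f y / @?g y) _ => apply (continuous_R_div f g)
  | |- continuous (fun y => / @?f y) _ => apply (continuous_R_inv f)
  | |- continuous (fun y => (@?f y) ^ ?n) _ => apply (continuous_R_pow f n)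
  | |- continuous (fun y => cos (@?f y)) _ => apply (continuous_R_cos f)
  | |- continuous (fun y => sin (@?f y)) _ => apply (continuous_R_sin f)
  | |- continuous (fun y => sqrt (@?f y)) _ => apply (continuous_R_sqrt f)
  | |- continuous (fun y => fst y) _ => apply continuous_R2_fst
  | |- continuous (fun y => snd y) _ => apply continuous_R2_snd
  | |- continuous (fun y => y) _ => apply continuous_id
  | |- continuous (fun y => ?c) _ => apply continuous_const
  end.

Ltac auto_cont := repeat auto_cont_step.

(* Equalities produced by Coquelicot's lemmas live in the carrier of [R_AbsRing], where
   [ring] and [field] do not recognise them. *)
Ltac R_eq := match goal with |- @eq _ ?x ?y => change (@eq R x y) end; cbv beta.

Lemma is_derive_eq (f : R -> R) x l l' : is_derive f x l -> l = l' -> is_derive f x l'.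
Proof. intros H <-; exact H. Qed.

Lemma is_derive_R_id x : is_derive (fun t : R => t) x 1.
Proof. apply (is_derive_id (K := R_AbsRing)). Qed.

Lemma is_derive_R_const (k x : R) : is_derive (fun _ : R => k) x 0.
Proof. apply (@is_derive_const R_AbsRing). Qed.

Lemma is_derive_R_plus (f g : R -> R) x df dg :
  is_derive f x df -> is_derive g x dg -> is_derive (fun t => f t + g t) x (df + dg).
Proof. apply @is_derive_plus. Qed.

Lemma is_derive_R_minus (f g : R -> R) x df dg :
  is_derive f x df -> is_derive g x dg -> is_derive (fun t => f t - g t) x (df - dg).
Proof. apply @is_derive_minus. Qed.

Lemma is_derive_R_mult (f g : R -> R) x df dg :
  is_derive f x df -> is_derive g x dg ->
  is_derive (fun t => f t * g t) x (df * g x + f x * dg).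
Proof. intros; apply @is_derive_mult; auto; intros; apply Rmult_comm. Qed.

Lemma is_RInt_R_plus (f g : R -> R) a b v w :
  is_RInt f a b v -> is_RInt g a b w -> is_RInt (fun t => f t + g t) a b (v + w).
Proof. apply (is_RInt_plus (V := R_NormedModule)). Qed.

Lemma is_RInt_R_minus (f g : R -> R) a b v w :
  is_RInt f a b v -> is_RInt g a b w -> is_RInt (fun t => f t - g t) a b (v - w).
Proof. apply (is_RInt_minus (V := R_NormedModule)). Qed.

Lemma is_RInt_R_scal (f : R -> R) a b v k :
  is_RInt f a b v -> is_RInt (fun t => k * f t) a b (k * v).
Proof. apply (is_RInt_scal (V := R_NormedModule)). Qed.

Lemma is_RInt_R_unique (f : R -> R) a b v w : is_RInt f a b v -> is_RInt f a b w -> v = w.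
Proof.
  intros Hv Hw.
  rewrite <- (is_RInt_unique (V := R_CompleteNormedModule) f a b v Hv).
  exact (is_RInt_unique (V := R_CompleteNormedModule) f a b w Hw).
Qed.

Lemma is_RInt_R_RInt (f : R -> R) a b :
  (forall t, continuous f t) -> is_RInt f a b (RInt f a b).
Proof.
  intros Hf; apply (RInt_correct (V := R_CompleteNormedModule)).
  apply (ex_RInt_continuous (V := R_CompleteNormedModule)); auto.
Qed.

Lemma ex_RInt_R_continuous (f : R -> R) a b : (forall t, continuous f t) -> ex_RInt f a b.
Proof. intros Hf; apply (ex_RInt_continuous (V := R_CompleteNormedModule)); auto. Qed.

Lemma continuous_ex_derive (h : R -> R) t : ex_derive h t -> continuous h t.
Proof. apply (ex_derive_continuous (K := R_AbsRing) (V := R_NormedModule)). Qed.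

Lemma MVT_Rabs (f : R -> R) (a b : R) :
  (forall z, Rabs (z - a) <= Rabs (b - a) -> ex_derive f z) ->
  exists c, Rabs (c - a) <= Rabs (b - a) /\ f b - f a = Derive f c * (b - a).
Proof.
  intros H.
  assert (Hab : forall z, Rmin a b <= z <= Rmax a b -> Rabs (z - a) <= Rabs (b - a)).
  { intros z Hz; unfold Rmin, Rmax in Hz; destruct (Rle_dec a b);
      unfold Rabs; repeat destruct Rcase_abs; lra. }
  destruct (MVT_gen f a b (Derive f)) as [c [Hc E]].
  - intros z Hz; apply Derive_correct, H, Hab; lra.
  - intros z Hz; apply continuity_pt_filterlim.
    apply continuous_ex_derive, H, Hab, Hz.
  - exists c; split; [apply Hab, Hc | exact E].
Qed.

Lemma differentiable_pt_lim_of_partials (g : R -> R -> R) x y :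
  locally_2d (fun u v => ex_derive (fun z => g z v) u /\ ex_derive (fun z => g u z) v) x y ->
  continuity_2d_pt (fun u v => Derive (fun z => g z v) u) x y ->
  continuity_2d_pt (fun u v => Derive (fun z => g u z) v) x y ->
  differentiable_pt_lim g x y (Derive (fun z => g z y) x) (Derive (fun z => g x z) y).
Proof.
  intros [d0 H0] H1 H2 eps.
  destruct (H1 (pos_div_2 eps)) as [d1 H1'].
  destruct (H2 (pos_div_2 eps)) as [d2 H2'].
  assert (Hd : 0 < Rmin d0 (Rmin d1 d2)).
  { apply Rmin_pos; [apply cond_pos | apply Rmin_pos; apply cond_pos]. }
  exists (mkposreal _ Hd); simpl; intros u v Hu Hv.
  assert (M0 := Rmin_l d0 (Rmin d1 d2)); assert (M1 := Rmin_r d0 (Rmin d1 d2)).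
  assert (M2 := Rmin_l d1 d2); assert (M3 := Rmin_r d1 d2).
  assert (Hd0 := cond_pos d0); assert (Hd2 := cond_pos d2).
  (* mean value theorem along the horizontal, then the vertical, side *)
  destruct (MVT_Rabs (fun z => g z v) x u) as [c1 [Hc1 E1]].
  { intros z Hz; apply (H0 z v); lra. }
  destruct (MVT_Rabs (fun z => g x z) y v) as [c2 [Hc2 E2]].
  { intros z Hz; apply (H0 x z); [rewrite Rminus_eq_0, Rabs_R0 |]; lra. }
  assert (A1 := H1' c1 v ltac:(lra) ltac:(lra)); simpl in A1.
  assert (A2 := H2' x c2 ltac:(rewrite Rminus_eq_0, Rabs_R0; lra) ltac:(lra)); simpl in A2.
  replace (g u v - g x y
           - (Derive (fun z => g z y) x * (u - x) + Derive (fun z => g x z) y * (v - y)))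
    with ((Derive (fun z => g z v) c1 - Derive (fun z => g z y) x) * (u - x)
          + (Derive (fun z => g x z) c2 - Derive (fun z => g x z) y) * (v - y)) by lra.
  eapply Rle_trans; [apply Rabs_triang |].
  rewrite !Rabs_mult.
  assert (Mx := Rmax_l (Rabs (u - x)) (Rabs (v - y))).
  assert (My := Rmax_r (Rabs (u - x)) (Rabs (v - y))).
  assert (P1 := Rabs_pos (u - x)); assert (P2 := Rabs_pos (v - y)).
  assert (P3 := Rabs_pos (Derive (fun z => g z v) c1 - Derive (fun z => g z y) x)).
  assert (P4 := Rabs_pos (Derive (fun z => g x z) c2 - Derive (fun z => g x z) y)).
  nra.
Qed.

Lemma is_derive_comp_2d (g : R -> R -> R) (X Y : R -> R) t lx ly dX dY :
  differentiable_pt_lim g (X t) (Y t) lx ly ->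
  is_derive X t dX -> is_derive Y t dY ->
  is_derive (fun s => g (X s) (Y s)) t (lx * dX + ly * dY).
Proof.
  intros Hg HX HY; apply is_derive_Reals.
  apply derivable_pt_lim_comp_2d; auto; apply is_derive_Reals; auto.
Qed.

Lemma C1_at_differentiable (h : R -> R -> R) x y :
  locally_2d (fun u v => C1_at h (u, v)) x y ->
  differentiable_pt_lim h x y (px h x y) (py h x y).
Proof.
  intros L.
  destruct (locally_2d_singleton _ _ _ L) as [_ [_ [_ [Hx Hy]]]].
  apply differentiable_pt_lim_of_partials;
    try (apply continuity_2d_pt_filterlim; assumption).
  eapply locally_2d_impl; [| exact L].
  apply locally_2d_forall; intros u v [A [B _]]; split; auto.
Qed.

Definition in_disk (x y : R) : Prop := x * x + y * y < 1.

Lemma unit_disk_pair x y : unit_disk (x, y) <-> in_disk x y.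
Proof.
  unfold unit_disk, in_disk, Cmod; cbn [fst snd].
  replace (x ^ 2 + y ^ 2) with (x * x + y * y) by ring.
  split; intros H.
  - rewrite <- sqrt_1 in H; apply sqrt_lt_0_alt in H; exact H.
  - rewrite <- sqrt_1; apply sqrt_lt_1_alt; nra.
Qed.

Lemma locally_2d_lt (f : R -> R -> R) x y c :
  continuity_2d_pt f x y -> f x y < c -> locally_2d (fun u v => f u v < c) x y.
Proof.
  intros Hf Hc.
  apply (locally_2d_impl (fun u v => Rabs (f u v - f x y) < c - f x y)).
  - apply locally_2d_forall; intros u v H; apply Rabs_def2 in H; lra.
  - exact (Hf (mkposreal _ (proj2 (Rlt_0_minus _ _) Hc))).
Qed.

Lemma in_disk_locally_2d x y : in_disk x y -> locally_2d in_disk x y.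
Proof.
  apply (locally_2d_lt (fun u v => u * u + v * v)).
  apply continuity_2d_pt_plus; apply continuity_2d_pt_mult;
    first [apply continuity_2d_pt_id1 | apply continuity_2d_pt_id2].
Qed.

Lemma sq_lt_1_locally_2d x t : x ^ 2 < 1 -> locally_2d (fun u _ => u ^ 2 < 1) x t.
Proof.
  apply (locally_2d_lt (fun u _ => u ^ 2)).
  apply (continuity_2d_pt_ext (fun u _ => u * u)); [intros; ring |].
  apply continuity_2d_pt_mult; apply continuity_2d_pt_id1.
Qed.

Lemma sq_lt_1_locally x : x ^ 2 < 1 -> locally x (fun y => y ^ 2 < 1).
Proof.
  intros H; apply (locally_2d_1d_const_y (fun u _ => u ^ 2 < 1) x 0), sq_lt_1_locally_2d, H.
Qed.

Lemma continuous_slice (F : R -> R -> R) r t :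
  continuous (fun q : R * R => F (fst q) (snd q)) (r, t) -> continuous (fun t => F r t) t.
Proof.
  intros H; apply (continuous_comp_2 (U := R_UniformSpace) (fun _ => r) (fun t => t) F t); auto.
  - apply continuous_const.
  - apply continuous_id.
Qed.

Lemma is_derive_RInt_param_sq_lt_1 (F dF : R -> R -> R) lo hi x : x ^ 2 < 1 ->
  (forall y t, y ^ 2 < 1 -> is_derive (fun z => F z t) y (dF y t)) ->
  (forall t, continuous (fun q : R * R => dF (fst q) (snd q)) (x, t)) ->
  (forall y, y ^ 2 < 1 -> ex_RInt (F y) lo hi) ->
  is_derive (fun y => RInt (F y) lo hi) x (RInt (dF x) lo hi).
Proof.
  intros Hx HD HC HI.
  assert (HdF : forall y t, y ^ 2 < 1 -> Derive (fun u => F u t) y = dF y t).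
  { intros y t Hy; apply is_derive_unique, HD, Hy. }
  rewrite (RInt_ext (dF x) (fun t => Derive (fun u => F u t) x)) by (intros; symmetry; auto).
  apply is_derive_RInt_param.
  - eapply filter_imp; [| apply sq_lt_1_locally, Hx].
    intros y Hy t _; eexists; apply HD, Hy.
  - intros t _; apply (continuity_2d_pt_ext_loc dF).
    + eapply locally_2d_impl; [| apply (sq_lt_1_locally_2d x t Hx)].
      apply locally_2d_forall; intros u v Hu; symmetry; auto.
    + apply continuity_2d_pt_filterlim, HC.
  - eapply filter_imp; [| apply sq_lt_1_locally, Hx]; auto.
Qed.

Lemma MVT_from_0 (q dq : R -> R) r : 0 < r < 1 ->
  (forall y, y ^ 2 < 1 -> is_derive q y (dq y)) ->
  exists c, q r - q 0 = dq c * r /\ 0 < c < r.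
Proof.
  intros Hr Hd.
  destruct (MVT_cor2 q dq 0 r) as [c [E Hc]]; [lra | | exists c; split; [lra | exact Hc]].
  intros c Hc; apply is_derive_Reals, Hd; nra.
Qed.

Section EulerEquations.
Variables P dP ddP : R -> R.
Hypothesis HP : forall r, r ^ 2 < 1 -> is_derive P r (dP r).
Hypothesis HdP : forall r, r ^ 2 < 1 -> is_derive dP r (ddP r).

(* The Euler equation r^2 P'' + r P' = 0 has the solutions A + B ln r; only the constants
   are smooth at 0. *)
Lemma euler0_const :
  (forall r, r ^ 2 < 1 -> r ^ 2 * ddP r + r * dP r = 0) ->
  forall r, 0 <= r < 1 -> P r = P 0.
Proof.
  intros Hode r Hr.
  destruct (Req_dec r 0) as [-> | Hr0]; [reflexivity |].
  assert (Hflat : forall y, 0 < y < 1 -> dP y = 0).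
  { intros y Hy.
    destruct (MVT_from_0 (fun r => r * dP r) (fun r => dP r + r * ddP r) y Hy) as [c [E Hc]].
    - intros z Hz; eapply is_derive_eq.
      + apply is_derive_R_mult; [apply is_derive_R_id | apply HdP, Hz].
      + R_eq; ring.
    - assert (Hq := Hode c ltac:(nra)).
      assert (Hc0 : dP c + c * ddP c = 0)
        by (apply (Rmult_eq_reg_l c); [rewrite Rmult_0_r, <- Hq; ring | lra]).
      rewrite Hc0, Rmult_0_l in E.
      apply (Rmult_eq_reg_l y); lra. }
  destruct (MVT_from_0 P dP r ltac:(lra) HP) as [c [E Hc]].
  rewrite Hflat in E by lra; lra.
Qed.

(* The Euler equation r^2 P'' + r P' - P = 0 has the solutions A r + B / r. *)
Section Linear.
Hypothesis Hode : forall r, r ^ 2 < 1 -> r ^ 2 * ddP r + r * dP r - P r = 0.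
Hypothesis HP0 : P 0 = 0.

Lemma euler1_tangent y : 0 < y < 1 -> y * dP y = P y.
Proof.
  intros Hy.
  destruct (MVT_from_0 (fun r => r ^ 2 * dP r - r * P r)
              (fun r => r ^ 2 * ddP r + r * dP r - P r) y Hy) as [c [E Hc]].
  - intros z Hz; eapply is_derive_eq.
    + apply is_derive_R_minus; apply is_derive_R_mult;
        [auto_derive; auto | apply HdP, Hz | apply is_derive_R_id | apply HP, Hz].
    + R_eq; ring.
  - rewrite Hode, HP0 in E by nra.
    assert (y * (y * dP y - P y) = 0) by nra.
    apply Rmult_integral in H; lra.
Qed.

Lemma euler1_ratio_const y z : 0 < y <= z -> z < 1 -> P y / y = P z / z.
Proof.
  intros Hyz Hz; destruct (Req_dec y z) as [-> | Hne]; [reflexivity |].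
  destruct (MVT_cor2 (fun r => P r / r) (fun r => (dP r * r - P r) / r ^ 2) y z ltac:(lra))
    as [c [E Hc]].
  - intros c Hc; apply is_derive_Reals; eapply is_derive_eq.
    + auto_derive; [split; [eexists; apply HP; nra | lra] | reflexivity].
    + replace (Derive (fun x => P x) c) with (dP c)
        by (symmetry; apply is_derive_unique, HP; nra).
      R_eq; field; lra.
  - rewrite (Rmult_comm (dP c)), euler1_tangent, Rminus_eq_0 in E by lra.
    unfold Rdiv in E; lra.
Qed.

Lemma euler1_linear r : 0 < r < 1 -> P r = r * dP 0.
Proof.
  intros Hr.
  enough (E : P r / r = dP 0) by (rewrite <- E; field; lra).
  destruct (Req_dec (P r / r) (dP 0)) as [E | Hne]; [exact E | exfalso].
  assert (Heps : 0 < Rabs (P r / r - dP 0)) by (apply Rabs_pos_lt; lra).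
  destruct (proj1 (is_derive_Reals P 0 (dP 0)) (HP 0 ltac:(nra)) _ Heps) as [d Hd].
  assert (Hd0 := cond_pos d).
  set (h := Rmin (d / 2) r).
  assert (Hh0 : 0 < h) by (apply Rmin_pos; lra).
  assert (Hh1 := Rmin_r (d / 2) r); assert (Hh2 := Rmin_l (d / 2) r); fold h in Hh1, Hh2.
  assert (K := Hd h ltac:(lra) ltac:(rewrite Rabs_pos_eq; lra)).
  rewrite Rplus_0_l, HP0, Rminus_0_r, (euler1_ratio_const h r) in K by lra.
  lra.
Qed.
End Linear.
End EulerEquations.

(** * The bathtub inequality *)

Lemma cos_Rabs t : cos (Rabs t) = cos t.
Proof. unfold Rabs; destruct Rcase_abs; [apply cos_neg | reflexivity]. Qed.

Lemma cos_le_cos_of_abs_le t x : 0 <= x <= PI -> Rabs t <= x -> cos x <= cos t.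
Proof.
  intros Hx Ht; rewrite <- (cos_Rabs t).
  destruct (Req_dec (Rabs t) x) as [-> | Hne]; [lra |].
  left; apply cos_decreasing_1; try lra; apply Rabs_pos.
Qed.

Lemma cos_le_cos_of_le_abs t x : 0 <= x -> x <= Rabs t <= PI -> cos t <= cos x.
Proof.
  intros Hx Ht; rewrite <- (cos_Rabs t).
  destruct (Req_dec (Rabs t) x) as [-> | Hne]; [lra |].
  left; apply cos_decreasing_1; lra.
Qed.

Lemma is_RInt_cos_sub_const k lo hi :
  is_RInt (fun t => cos t - k) lo hi ((sin hi - k * hi) - (sin lo - k * lo)).
Proof.
  apply (is_RInt_derive (fun t => sin t - k * t)).
  - intros t _; eapply is_derive_eq; [auto_derive; auto | R_eq; ring].
  - intros t _; apply continuous_R_minus; [apply continuous_cos | apply continuous_const].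
Qed.

Lemma is_RInt_const_sub_cos k lo hi :
  is_RInt (fun t => k - cos t) lo hi ((k * hi - sin hi) - (k * lo - sin lo)).
Proof.
  apply (is_RInt_derive (fun t => k * t - sin t)).
  - intros t _; eapply is_derive_eq; [auto_derive; auto | R_eq; ring].
  - intros t _; apply continuous_R_minus; [apply continuous_const | apply continuous_cos].
Qed.

Lemma RInt_Chasles3 (F : R -> R) a b c d : (forall t, continuous F t) ->
  RInt F a d = RInt F a b + RInt F b c + RInt F c d.
Proof.
  intros HF; apply (is_RInt_R_unique F a d); [apply is_RInt_R_RInt, HF |].
  apply (is_RInt_Chasles F _ c); [apply (is_RInt_Chasles F _ b) |]; apply is_RInt_R_RInt, HF.
Qed.

Lemma continuous_mult_cos (f : R -> R) : (forall t, continuous f t) ->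
  forall t, continuous (fun t => f t * cos t) t.
Proof. intros Hf t; apply continuous_R_mult; [apply Hf | apply continuous_cos]. Qed.

Lemma RInt_mul_cos_le (V h : R -> R) k lo hi w : lo <= hi ->
  (forall t, continuous V t) -> (forall t, continuous h t) ->
  (forall t, lo < t < hi -> V t * (cos t - k) <= h t) -> is_RInt h lo hi w ->
  RInt (fun t => V t * cos t) lo hi <= k * RInt V lo hi + w.
Proof.
  intros Hlo HV Hh Hle Hw.
  assert (HkVh : forall t, continuous (fun t => k * V t + h t) t) by (intros; auto_cont; auto).
  rewrite <- (is_RInt_R_unique _ _ _ _ _ (is_RInt_R_RInt _ lo hi HkVh)
                (is_RInt_R_plus _ _ _ _ _ _
                   (is_RInt_R_scal _ _ _ _ k (is_RInt_R_RInt _ lo hi HV)) Hw)).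
  apply RInt_le; [exact Hlo | | | intros t Ht; specialize (Hle t Ht); lra];
    apply (ex_RInt_continuous (V := R_CompleteNormedModule)); intros; auto_cont;
    auto using continuous_cos.
Qed.

(* Among continuous V with |V| <= 1 and mean m on [-PI, PI], the integral of V cos is
   (almost) maximised by the sign of cos t - cos al, where al = PI (1 + m) / 2. *)
Lemma bathtub (V : R -> R) m :
  (forall t, continuous V t) -> (forall t, - 1 <= V t <= 1) ->
  is_RInt V (- PI) PI (2 * PI * m) -> - 1 < m < 1 ->
  RInt (fun t => V t * cos t) (- PI) PI <= 4 * cos (PI / 2 * m).
Proof.
  intros HC HB HI Hm.
  assert (HPI := PI_RGT_0).
  set (al := PI * (1 + m) / 2); assert (Hal : 0 < al < PI) by (unfold al; split; nra).
  set (k := cos al).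
  assert (HCk : forall t, continuous (fun t => k - cos t) t) by (intros; auto_cont).
  assert (HkC : forall t, continuous (fun t => cos t - k) t) by (intros; auto_cont).
  assert (B1 := RInt_mul_cos_le V _ k (- PI) (- al) _ ltac:(lra) HC HCk
                  ltac:(intros t Ht; assert (cos t <= k)
                          by (apply cos_le_cos_of_le_abs; [lra | rewrite Rabs_left; lra]);
                        specialize (HB t); nra)
                  (is_RInt_const_sub_cos k (- PI) (- al))).
  assert (B2 := RInt_mul_cos_le V _ k (- al) al _ ltac:(lra) HC HkC
                  ltac:(intros t Ht; assert (k <= cos t)
                          by (apply cos_le_cos_of_abs_le; [lra | apply Rabs_le; lra]);
                        specialize (HB t); nra)
                  (is_RInt_cos_sub_const k (- al) al)).
  assert (B3 := RInt_mul_cos_le V _ k al PI _ ltac:(lra) HC HCk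
                  ltac:(intros t Ht; assert (cos t <= k)
                          by (apply cos_le_cos_of_le_abs; [lra | rewrite Rabs_right; lra]);
                        specialize (HB t); nra)
                  (is_RInt_const_sub_cos k al PI)).
  assert (HV := RInt_Chasles3 V (- PI) (- al) al PI HC); rewrite (is_RInt_unique _ _ _ _ HI) in HV.
  rewrite (RInt_Chasles3 (fun t : R => V t * cos t) (- PI) (- al) al PI (continuous_mult_cos V HC)).
  rewrite !sin_neg, sin_PI in B1; rewrite sin_neg in B2; rewrite sin_PI in B3.
  replace (4 * cos (PI / 2 * m)) with (4 * sin al)
    by (rewrite cos_sin; unfold al; f_equal; f_equal; field).
  assert (k * (RInt V (- PI) (- al) + RInt V (- al) al + RInt V al PI) = k * (2 * PI * m))
    by (rewrite HV; ring).
  assert (k * al * 2 = k * PI + k * PI * m) by (unfold al; field).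
  lra.
Qed.

Lemma is_RInt_cos_sq : is_RInt (fun t => cos t * cos t) (- PI) PI PI.
Proof.
  replace PI with ((PI + sin PI * cos PI) / 2 - (- PI + sin (- PI) * cos (- PI)) / 2) at 3
    by (rewrite sin_neg, cos_neg, sin_PI; field).
  apply (is_RInt_derive (fun t => (t + sin t * cos t) / 2)).
  - intros t _; eapply is_derive_eq; [auto_derive; auto |].
    assert (H := sin2_cos2 t); unfold Rsqr in H; R_eq; nra.
  - intros t _; apply continuous_R_mult; apply continuous_cos.
Qed.

Lemma is_RInt_sin_cos : is_RInt (fun t => sin t * cos t) (- PI) PI 0.
Proof.
  replace 0 with (sin PI * sin PI / 2 - sin (- PI) * sin (- PI) / 2)
    by (rewrite sin_neg, sin_PI; field).
  apply (is_RInt_derive (fun t => sin t * sin t / 2)).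
  - intros t _; eapply is_derive_eq; [auto_derive; auto | R_eq; field].
  - intros t _; apply continuous_R_mult; [apply continuous_sin | apply continuous_cos].
Qed.

Lemma is_RInt_cos_period : is_RInt cos (- PI) PI 0.
Proof.
  replace 0 with (sin PI - sin (- PI)) by (rewrite sin_neg, sin_PI; ring).
  apply (is_RInt_derive sin); intros t _; [apply is_derive_sin | apply continuous_cos].
Qed.

Lemma le_of_forall_lt_1_mult_le (D C : R) : (forall r, 0 < r < 1 -> r * D <= C) -> D <= C.
Proof.
  intros H; destruct (Rle_or_lt D C) as [| Hlt]; [assumption | exfalso].
  destruct (Rle_or_lt (D + C) 0) as [Hs | Hs].
  - assert (K := H (1 / 2) ltac:(lra)); lra.
  - assert (HD : 0 < D) by lra.
    assert (K := H ((D + C) / (2 * D))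
                   ltac:(split; [apply Rdiv_lt_0_compat | apply Rlt_div_l]; lra)).
    replace ((D + C) / (2 * D) * D) with ((D + C) / 2) in K by (field; lra).
    lra.
Qed.

Lemma is_RInt_derive_periodic (G dG : R -> R) :
  (forall t, is_derive G t (dG t)) -> (forall t, continuous dG t) -> G (- PI) = G PI ->
  is_RInt dG (- PI) PI 0.
Proof.
  intros HG HdG Hper; replace 0 with (G PI - G (- PI)) by lra.
  apply (is_RInt_derive G dG); auto.
Qed.

(** * Harmonic functions in polar coordinates around a point *)

Section Harmonic.
Variable g : R -> R -> R.
Hypothesis Hg : harmonic_real_on unit_disk g.

Lemma harmonic_in_disk x y : in_disk x y ->
  C1_at g (x, y) /\ C1_at (px g) (x, y) /\ C1_at (py g) (x, y) /\
  px (px g) x y + py (py g) x y = 0.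
Proof. intros H; apply (Hg (x, y)), unit_disk_pair, H. Qed.

Lemma harmonic_differentiable x y : in_disk x y ->
  differentiable_pt_lim g x y (px g x y) (py g x y).
Proof.
  intros H; apply C1_at_differentiable.
  eapply locally_2d_impl; [| apply in_disk_locally_2d, H].
  apply locally_2d_forall; intros u v Huv; apply (harmonic_in_disk u v Huv).
Qed.

Lemma harmonic_px_differentiable x y : in_disk x y ->
  differentiable_pt_lim (px g) x y (px (px g) x y) (py (px g) x y).
Proof.
  intros H; apply C1_at_differentiable.
  eapply locally_2d_impl; [| apply in_disk_locally_2d, H].
  apply locally_2d_forall; intros u v Huv; apply (harmonic_in_disk u v Huv).
Qed.

Lemma harmonic_py_differentiable x y : in_disk x y ->
  differentiable_pt_lim (py g) x y (px (py g) x y) (py (py g) x y).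
Proof.
  intros H; apply C1_at_differentiable.
  eapply locally_2d_impl; [| apply in_disk_locally_2d, H].
  apply locally_2d_forall; intros u v Huv; apply (harmonic_in_disk u v Huv).
Qed.

End Harmonic.

Definition continuous_on_disk (h : R -> R -> R) : Prop :=
  forall x y, in_disk x y -> continuous (fun q : R * R => h (fst q) (snd q)) (x, y).

Ltac harmonic_continuous Hg :=
  let x := fresh in let y := fresh in let Hxy := fresh in
  intros x y Hxy;
  destruct (harmonic_in_disk _ Hg x y Hxy)
    as [[? [? [? [? ?]]]] [[? [? [? [? ?]]]] [[? [? [? [? ?]]]] _]]];
  assumption.

Definition cmul_re (x1 y1 x2 y2 : R) : R := x1 * x2 - y1 * y2.
Definition cmul_im (x1 y1 x2 y2 : R) : R := x1 * y2 + y1 * x2.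

Section Mobius.
Variables a b : R.

(* With z = a + ib and e = e1 + i e2, [mob_re + i mob_im] is the disk automorphism
   w |-> (w + z) / (1 + conj(z) w) at w = r e. Writing D = 1 + conj(z) r e, its
   r-derivatives are (1 - |z|^2) e / D^2 and -2 (1 - |z|^2) conj(z) e^2 / D^3, where
   1 / D^k is expanded as conj(D)^k / |D|^(2k). *)
Definition den_re r e1 e2 := 1 + a * (r * e1) + b * (r * e2).
Definition den_im r e1 e2 := a * (r * e2) - b * (r * e1).
Definition den_norm2 r e1 e2 := den_re r e1 e2 ^ 2 + den_im r e1 e2 ^ 2.
Definition disk_defect := 1 - a ^ 2 - b ^ 2.

Definition mob_re r e1 e2 :=
  ((r * e1 + a) * den_re r e1 e2 + (r * e2 + b) * den_im r e1 e2) / den_norm2 r e1 e2.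
Definition mob_im r e1 e2 :=
  ((r * e2 + b) * den_re r e1 e2 - (r * e1 + a) * den_im r e1 e2) / den_norm2 r e1 e2.

Definition mob_re_r r e1 e2 :=
  disk_defect * ((den_re r e1 e2 ^ 2 - den_im r e1 e2 ^ 2) * e1
                 + 2 * den_re r e1 e2 * den_im r e1 e2 * e2) / den_norm2 r e1 e2 ^ 2.
Definition mob_im_r r e1 e2 :=
  disk_defect * ((den_re r e1 e2 ^ 2 - den_im r e1 e2 ^ 2) * e2
                 - 2 * den_re r e1 e2 * den_im r e1 e2 * e1) / den_norm2 r e1 e2 ^ 2.

Definition den_conj2_re r e1 e2 := den_re r e1 e2 ^ 2 - den_im r e1 e2 ^ 2.
Definition den_conj2_im r e1 e2 := - (2 * den_re r e1 e2 * den_im r e1 e2).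
Definition den_conj3_re r e1 e2 :=
  cmul_re (den_conj2_re r e1 e2) (den_conj2_im r e1 e2) (den_re r e1 e2) (- den_im r e1 e2).
Definition den_conj3_im r e1 e2 :=
  cmul_im (den_conj2_re r e1 e2) (den_conj2_im r e1 e2) (den_re r e1 e2) (- den_im r e1 e2).
Definition zbar_e2_re e1 e2 := cmul_re a (- b) (e1 ^ 2 - e2 ^ 2) (2 * e1 * e2).
Definition zbar_e2_im e1 e2 := cmul_im a (- b) (e1 ^ 2 - e2 ^ 2) (2 * e1 * e2).

Definition mob_re_rr r e1 e2 :=
  - 2 * disk_defect * cmul_re (zbar_e2_re e1 e2) (zbar_e2_im e1 e2)
      (den_conj3_re r e1 e2) (den_conj3_im r e1 e2) / den_norm2 r e1 e2 ^ 3.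
Definition mob_im_rr r e1 e2 :=
  - 2 * disk_defect * cmul_im (zbar_e2_re e1 e2) (zbar_e2_im e1 e2)
      (den_conj3_re r e1 e2) (den_conj3_im r e1 e2) / den_norm2 r e1 e2 ^ 3.

Ltac unfold_mob :=
  unfold mob_re_rr, mob_im_rr, mob_re_r, mob_im_r, mob_re, mob_im, den_conj3_re, den_conj3_im,
    zbar_e2_re, zbar_e2_im, den_conj2_re, den_conj2_im, cmul_re, cmul_im, den_norm2,
    den_re, den_im, disk_defect in *.

Ltac solve_mob_derive := intros H; unfold_mob; auto_derive; auto; field; auto.

Lemma is_derive_mob_re r e1 e2 : den_norm2 r e1 e2 <> 0 ->
  is_derive (fun r => mob_re r e1 e2) r (mob_re_r r e1 e2).
Proof. solve_mob_derive. Qed.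

Lemma is_derive_mob_im r e1 e2 : den_norm2 r e1 e2 <> 0 ->
  is_derive (fun r => mob_im r e1 e2) r (mob_im_r r e1 e2).
Proof. solve_mob_derive. Qed.

Lemma is_derive_mob_re_r r e1 e2 : den_norm2 r e1 e2 <> 0 ->
  is_derive (fun r => mob_re_r r e1 e2) r (mob_re_rr r e1 e2).
Proof. solve_mob_derive. Qed.

Lemma is_derive_mob_im_r r e1 e2 : den_norm2 r e1 e2 <> 0 ->
  is_derive (fun r => mob_im_r r e1 e2) r (mob_im_rr r e1 e2).
Proof. solve_mob_derive. Qed.

Lemma den_norm2_pos r e1 e2 : a ^ 2 + b ^ 2 < 1 -> r ^ 2 < 1 -> e1 ^ 2 + e2 ^ 2 = 1 ->
  0 < den_norm2 r e1 e2.
Proof.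
  intros Hab Hr He; unfold den_norm2, den_re, den_im.
  set (t := r * (a * e1 + b * e2)).
  assert (Lagrange : (a * e1 + b * e2) ^ 2 + (a * e2 - b * e1) ^ 2
                     = (a ^ 2 + b ^ 2) * (e1 ^ 2 + e2 ^ 2)) by ring.
  assert (Ht : t ^ 2 < 1).
  { unfold t; rewrite He, Rmult_1_r in Lagrange.
    assert (0 <= (a * e2 - b * e1) ^ 2) by apply pow2_ge_0.
    assert (0 <= r ^ 2) by apply pow2_ge_0.
    replace ((r * (a * e1 + b * e2)) ^ 2) with (r ^ 2 * (a * e1 + b * e2) ^ 2) by ring.
    nra. }
  replace (1 + a * (r * e1) + b * (r * e2)) with (1 + t) by (unfold t; ring).
  assert (0 < (1 + t) ^ 2) by (apply pow_lt; nra).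
  assert (0 <= (a * (r * e2) - b * (r * e1)) ^ 2) by apply pow2_ge_0.
  lra.
Qed.

Lemma mob_in_disk r e1 e2 : a ^ 2 + b ^ 2 < 1 -> r ^ 2 < 1 -> e1 ^ 2 + e2 ^ 2 = 1 ->
  in_disk (mob_re r e1 e2) (mob_im r e1 e2).
Proof.
  intros Hab Hr He; assert (HP := den_norm2_pos r e1 e2 Hab Hr He).
  unfold in_disk.
  replace (mob_re r e1 e2 * mob_re r e1 e2 + mob_im r e1 e2 * mob_im r e1 e2)
    with (((r * e1 + a) ^ 2 + (r * e2 + b) ^ 2) / den_norm2 r e1 e2)
    by (unfold mob_re, mob_im, den_norm2 in *; field; lra).
  apply Rlt_div_l; [exact HP |].
  assert (E : den_norm2 r e1 e2 - ((r * e1 + a) ^ 2 + (r * e2 + b) ^ 2)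
              = (1 - (a ^ 2 + b ^ 2)) * (1 - r ^ 2 * (e1 ^ 2 + e2 ^ 2)))
    by (unfold den_norm2, den_re, den_im; ring).
  rewrite He in E; nra.
Qed.

Lemma mob_at_0 e1 e2 :
  mob_re 0 e1 e2 = a /\ mob_im 0 e1 e2 = b /\
  mob_re_r 0 e1 e2 = disk_defect * e1 /\ mob_im_r 0 e1 e2 = disk_defect * e2.
Proof.
  unfold mob_re, mob_im, mob_re_r, mob_im_r, den_norm2, den_re, den_im.
  repeat split; field_simplify; try reflexivity; lra.
Qed.

Definition rot_re (c s t : R) := c * cos t - s * sin t.
Definition rot_im (c s t : R) := s * cos t + c * sin t.

Lemma rot_norm c s t : c ^ 2 + s ^ 2 = 1 -> rot_re c s t ^ 2 + rot_im c s t ^ 2 = 1.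
Proof.
  intros H; unfold rot_re, rot_im.
  replace ((c * cos t - s * sin t) ^ 2 + (s * cos t + c * sin t) ^ 2)
    with ((c ^ 2 + s ^ 2) * (sin t ^ 2 + cos t ^ 2)) by ring.
  assert (Pythagoras := sin2_cos2 t); unfold Rsqr in Pythagoras.
  rewrite H; lra.
Qed.

Lemma rot_periodic c s : rot_re c s (- PI) = rot_re c s PI /\ rot_im c s (- PI) = rot_im c s PI.
Proof. unfold rot_re, rot_im; rewrite cos_neg, sin_neg, sin_PI; split; ring. Qed.

Section Rotation.
Variables c s : R.
Local Notation e1 t := (rot_re c s t).
Local Notation e2 t := (rot_im c s t).

(* Conformality: on functions of r e^{it}, the angular derivative is i r times the radial one. *)
Ltac solve_mob_derive_t :=
  intros H; unfold rot_re, rot_im in *; unfold_mob; auto_derive; auto; field; auto.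

Lemma is_derive_mob_re_t r t : den_norm2 r (e1 t) (e2 t) <> 0 ->
  is_derive (fun t => mob_re r (e1 t) (e2 t)) t (- r * mob_im_r r (e1 t) (e2 t)).
Proof. solve_mob_derive_t. Qed.

Lemma is_derive_mob_im_t r t : den_norm2 r (e1 t) (e2 t) <> 0 ->
  is_derive (fun t => mob_im r (e1 t) (e2 t)) t (r * mob_re_r r (e1 t) (e2 t)).
Proof. solve_mob_derive_t. Qed.

Lemma is_derive_mob_im_r_t r t : den_norm2 r (e1 t) (e2 t) <> 0 ->
  is_derive (fun t => - r * mob_im_r r (e1 t) (e2 t)) t
    (- r ^ 2 * mob_re_rr r (e1 t) (e2 t) - r * mob_re_r r (e1 t) (e2 t)).
Proof. solve_mob_derive_t. Qed.

Lemma is_derive_mob_re_r_t r t : den_norm2 r (e1 t) (e2 t) <> 0 ->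
  is_derive (fun t => r * mob_re_r r (e1 t) (e2 t)) t
    (- r ^ 2 * mob_im_rr r (e1 t) (e2 t) - r * mob_im_r r (e1 t) (e2 t)).
Proof. solve_mob_derive_t. Qed.

Section Continuity.
Variable p : R * R.
Hypothesis Hp : den_norm2 (fst p) (e1 (snd p)) (e2 (snd p)) <> 0.
Local Notation continuous_polar F :=
  (continuous (fun q : R * R => F (fst q) (e1 (snd q)) (e2 (snd q))) p).

Ltac solve_mob_cont :=
  unfold rot_re, rot_im in *; unfold_mob; auto_cont; try apply pow_nonzero; assumption.

Lemma continuous_mob_re : continuous_polar mob_re. Proof. solve_mob_cont. Qed.
Lemma continuous_mob_im : continuous_polar mob_im. Proof. solve_mob_cont. Qed.
Lemma continuous_mob_re_r : continuous_polar mob_re_r. Proof. solve_mob_cont. Qed.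
Lemma continuous_mob_im_r : continuous_polar mob_im_r. Proof. solve_mob_cont. Qed.
Lemma continuous_mob_re_rr : continuous_polar mob_re_rr. Proof. solve_mob_cont. Qed.
Lemma continuous_mob_im_rr : continuous_polar mob_im_rr. Proof. solve_mob_cont. Qed.
End Continuity.
End Rotation.
End Mobius.

Section Polar.
Variable g : R -> R -> R.
Hypothesis Hg : harmonic_real_on unit_disk g.
Variables a b c s : R.
Hypothesis Hab : a ^ 2 + b ^ 2 < 1.
Hypothesis Hcs : c ^ 2 + s ^ 2 = 1.

Definition polX r t := mob_re a b r (rot_re c s t) (rot_im c s t).
Definition polY r t := mob_im a b r (rot_re c s t) (rot_im c s t).
Definition polX_r r t := mob_re_r a b r (rot_re c s t) (rot_im c s t).
Definition polY_r r t := mob_im_r a b r (rot_re c s t) (rot_im c s t).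
Definition polX_rr r t := mob_re_rr a b r (rot_re c s t) (rot_im c s t).
Definition polY_rr r t := mob_im_rr a b r (rot_re c s t) (rot_im c s t).
Definition polX_t r t := - r * polY_r r t.
Definition polY_t r t := r * polX_r r t.
Definition polX_tt r t := - r ^ 2 * polX_rr r t - r * polX_r r t.
Definition polY_tt r t := - r ^ 2 * polY_rr r t - r * polY_r r t.

(* g in polar coordinates (r, t) around z = a + ib, through the disk automorphism
   sending 0 to z, with directions rotated by c + is; the other definitions are its
   first and second partial derivatives, as given by the chain rule. *)
Definition polU r t := g (polX r t) (polY r t).
Definition polU_r r t :=
  px g (polX r t) (polY r t) * polX_r r t + py g (polX r t) (polY r t) * polY_r r t.
Definition polU_rr r t :=
  (px (px g) (polX r t) (polY r t) * polX_r r t + py (px g) (polX r t) (polY r t) * polY_r r t)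
    * polX_r r t
  + px g (polX r t) (polY r t) * polX_rr r t
  + (px (py g) (polX r t) (polY r t) * polX_r r t + py (py g) (polX r t) (polY r t) * polY_r r t)
    * polY_r r t
  + py g (polX r t) (polY r t) * polY_rr r t.
Definition polU_t r t :=
  px g (polX r t) (polY r t) * polX_t r t + py g (polX r t) (polY r t) * polY_t r t.
Definition polU_tt r t :=
  (px (px g) (polX r t) (polY r t) * polX_t r t + py (px g) (polX r t) (polY r t) * polY_t r t)
    * polX_t r t
  + px g (polX r t) (polY r t) * polX_tt r t
  + (px (py g) (polX r t) (polY r t) * polX_t r t + py (py g) (polX r t) (polY r t) * polY_t r t)
    * polY_t r t
  + py g (polX r t) (polY r t) * polY_tt r t.

Lemma den_norm2_polar_neq_0 r t : r ^ 2 < 1 ->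
  den_norm2 a b r (rot_re c s t) (rot_im c s t) <> 0.
Proof. intros Hr; apply Rgt_not_eq, den_norm2_pos, rot_norm; auto. Qed.

Lemma polXY_in_disk r t : r ^ 2 < 1 -> in_disk (polX r t) (polY r t).
Proof. intros Hr; apply mob_in_disk, rot_norm; auto. Qed.

Section Radius.
Variable r : R.
Hypothesis Hr : r ^ 2 < 1.
Let Hden t := den_norm2_polar_neq_0 r t Hr.
Let Hdisk t := polXY_in_disk r t Hr.

Lemma is_derive_polU_r t : is_derive (fun r => polU r t) r (polU_r r t).
Proof.
  unfold polU, polU_r; apply is_derive_comp_2d.
  - apply (harmonic_differentiable g Hg), Hdisk.
  - apply is_derive_mob_re, Hden.
  - apply is_derive_mob_im, Hden.
Qed.

Lemma is_derive_polU_rr t : is_derive (fun r => polU_r r t) r (polU_rr r t).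
Proof.
  unfold polU_r; eapply is_derive_eq.
  - apply is_derive_R_plus; apply is_derive_R_mult.
    + apply is_derive_comp_2d; [apply (harmonic_px_differentiable g Hg), Hdisk | |];
        [apply is_derive_mob_re | apply is_derive_mob_im]; apply Hden.
    + apply is_derive_mob_re_r, Hden.
    + apply is_derive_comp_2d; [apply (harmonic_py_differentiable g Hg), Hdisk | |];
        [apply is_derive_mob_re | apply is_derive_mob_im]; apply Hden.
    + apply is_derive_mob_im_r, Hden.
  - R_eq; unfold polU_rr, polX_rr, polY_rr, polX_r, polY_r, polX, polY; ring.
Qed.

Lemma is_derive_polU_t t : is_derive (fun t => polU r t) t (polU_t r t).
Proof.
  unfold polU, polU_t; apply is_derive_comp_2d.
  - apply (harmonic_differentiable g Hg), Hdisk.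
  - apply is_derive_mob_re_t, Hden.
  - apply is_derive_mob_im_t, Hden.
Qed.

Lemma is_derive_polU_tt t : is_derive (fun t => polU_t r t) t (polU_tt r t).
Proof.
  unfold polU_t; eapply is_derive_eq.
  - apply is_derive_R_plus; apply is_derive_R_mult.
    + apply is_derive_comp_2d; [apply (harmonic_px_differentiable g Hg), Hdisk | |];
        [apply is_derive_mob_re_t | apply is_derive_mob_im_t]; apply Hden.
    + apply is_derive_mob_im_r_t, Hden.
    + apply is_derive_comp_2d; [apply (harmonic_py_differentiable g Hg), Hdisk | |];
        [apply is_derive_mob_re_t | apply is_derive_mob_im_t]; apply Hden.
    + apply is_derive_mob_re_r_t, Hden.
  - R_eq; unfold polU_tt, polX_tt, polY_tt, polX_t, polY_t, polX_rr, polY_rr, polX_r, polY_r,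
      polX, polY.
    ring.
Qed.

Lemma polU_laplace t : r ^ 2 * polU_rr r t + r * polU_r r t + polU_tt r t = 0.
Proof.
  destruct (harmonic_in_disk g Hg _ _ (Hdisk t)) as [_ [_ [_ L]]].
  unfold polU_rr, polU_r, polU_tt, polX_tt, polY_tt, polX_t, polY_t.
  replace (py (py g) (polX r t) (polY r t)) with (- px (px g) (polX r t) (polY r t)) by lra.
  ring.
Qed.

End Radius.

Lemma polU_periodic r : polU r (- PI) = polU r PI /\ polU_t r (- PI) = polU_t r PI.
Proof.
  destruct (rot_periodic c s) as [E1 E2].
  unfold polU_t, polU, polX_t, polY_t, polX, polY, polX_r, polY_r; rewrite E1, E2.
  split; reflexivity.
Qed.

Section Continuity.
Variable p : R * R.
Hypothesis Hp : fst p ^ 2 < 1.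
Let Hden := den_norm2_polar_neq_0 (fst p) (snd p) Hp.
Local Notation continuous_polar F := (continuous (fun q : R * R => F (fst q) (snd q)) p).

Lemma continuous_polX : continuous_polar polX. Proof. exact (continuous_mob_re a b c s p Hden). Qed.
Lemma continuous_polY : continuous_polar polY. Proof. exact (continuous_mob_im a b c s p Hden). Qed.
Lemma continuous_polX_r : continuous_polar polX_r.
Proof. exact (continuous_mob_re_r a b c s p Hden). Qed.
Lemma continuous_polY_r : continuous_polar polY_r.
Proof. exact (continuous_mob_im_r a b c s p Hden). Qed.
Lemma continuous_polX_rr : continuous_polar polX_rr.
Proof. exact (continuous_mob_re_rr a b c s p Hden). Qed.
Lemma continuous_polY_rr : continuous_polar polY_rr.
Proof. exact (continuous_mob_im_rr a b c s p Hden). Qed.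

Lemma continuous_polar_comp (h : R -> R -> R) : continuous_on_disk h ->
  continuous (fun q : R * R => h (polX (fst q) (snd q)) (polY (fst q) (snd q))) p.
Proof.
  intros Hh; apply (continuous_comp_2 (fun q : R * R => polX (fst q) (snd q))
                                      (fun q : R * R => polY (fst q) (snd q)) h).
  - apply continuous_polX.
  - apply continuous_polY.
  - destruct p as [r t]; apply Hh, polXY_in_disk, Hp.
Qed.

Ltac polU_cont_step :=
  match goal with
  | |- continuous (fun q => polX (fst q) (snd q)) _ => apply continuous_polX
  | |- continuous (fun q => polY (fst q) (snd q)) _ => apply continuous_polY
  | |- continuous (fun q => polX_r (fst q) (snd q)) _ => apply continuous_polX_r
  | |- continuous (fun q => polY_r (fst q) (snd q)) _ => apply continuous_polY_r
  | |- continuous (fun q => polX_rr (fst q) (snd q)) _ => apply continuous_polX_rr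
  | |- continuous (fun q => polY_rr (fst q) (snd q)) _ => apply continuous_polY_rr
  | |- continuous (fun q => ?h (polX (fst q) (snd q)) (polY (fst q) (snd q))) _ =>
      apply (continuous_polar_comp h); harmonic_continuous Hg
  | _ => auto_cont_step
  end.

Ltac solve_polU_cont :=
  unfold polU, polU_r, polU_rr, polU_tt, polX_t, polY_t, polX_tt, polY_tt;
  repeat polU_cont_step.

Lemma continuous_polU : continuous_polar polU. Proof. solve_polU_cont. Qed.
Lemma continuous_polU_r : continuous_polar polU_r. Proof. solve_polU_cont. Qed.
Lemma continuous_polU_rr : continuous_polar polU_rr. Proof. solve_polU_cont. Qed.
Lemma continuous_polU_tt : continuous_polar polU_tt. Proof. solve_polU_cont. Qed.
End Continuity.

Section Slices.
Variable r : R.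
Hypothesis Hr : r ^ 2 < 1.

Lemma continuous_polU_slice t : continuous (fun t => polU r t) t.
Proof. apply (continuous_slice polU), (continuous_polU (r, t)), Hr. Qed.
Lemma continuous_polU_r_slice t : continuous (fun t => polU_r r t) t.
Proof. apply (continuous_slice polU_r), (continuous_polU_r (r, t)), Hr. Qed.
Lemma continuous_polU_rr_slice t : continuous (fun t => polU_rr r t) t.
Proof. apply (continuous_slice polU_rr), (continuous_polU_rr (r, t)), Hr. Qed.
Lemma continuous_polU_tt_slice t : continuous (fun t => polU_tt r t) t.
Proof. apply (continuous_slice polU_tt), (continuous_polU_tt (r, t)), Hr. Qed.

End Slices.

Definition fourier_0 r := RInt (fun t => polU r t) (- PI) PI.
Definition fourier_0_r r := RInt (fun t => polU_r r t) (- PI) PI.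
Definition fourier_0_rr r := RInt (fun t => polU_rr r t) (- PI) PI.
Definition fourier_cos r := RInt (fun t => polU r t * cos t) (- PI) PI.
Definition fourier_cos_r r := RInt (fun t => polU_r r t * cos t) (- PI) PI.
Definition fourier_cos_rr r := RInt (fun t => polU_rr r t * cos t) (- PI) PI.

(* Integrating the polar Laplace equation over a period kills the angular term. *)
Lemma fourier_0_euler r : r ^ 2 < 1 -> r ^ 2 * fourier_0_rr r + r * fourier_0_r r = 0.
Proof.
  intros Hr.
  assert (Irr := is_RInt_R_RInt _ (- PI) PI (continuous_polU_rr_slice r Hr)).
  assert (Ir := is_RInt_R_RInt _ (- PI) PI (continuous_polU_r_slice r Hr)).
  assert (Itt := is_RInt_derive_periodic (polU_t r) (polU_tt r) (is_derive_polU_tt r Hr)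
                   (continuous_polU_tt_slice r Hr) (proj2 (polU_periodic r))).
  apply (is_RInt_R_unique (fun t => r ^ 2 * polU_rr r t + r * polU_r r t) (- PI) PI).
  - apply is_RInt_R_plus; apply is_RInt_R_scal; assumption.
  - apply (is_RInt_ext (fun t => - 1 * polU_tt r t)).
    + intros t _; assert (L := polU_laplace r Hr t); lra.
    + replace 0 with (- 1 * 0) by ring; apply is_RInt_R_scal, Itt.
Qed.

(* Integrating the polar Laplace equation against cos t; by parts, the angular term
   becomes - fourier_cos. *)
Lemma fourier_cos_euler r : r ^ 2 < 1 ->
  r ^ 2 * fourier_cos_rr r + r * fourier_cos_r r - fourier_cos r = 0.
Proof.
  intros Hr.
  assert (Irr := is_RInt_R_RInt _ (- PI) PI
                   (continuous_mult_cos _ (continuous_polU_rr_slice r Hr))).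
  assert (Ir := is_RInt_R_RInt _ (- PI) PI (continuous_mult_cos _ (continuous_polU_r_slice r Hr))).
  assert (I0 := is_RInt_R_RInt _ (- PI) PI (continuous_mult_cos _ (continuous_polU_slice r Hr))).
  assert (Itt : is_RInt (fun t => (polU_tt r t + polU r t) * cos t) (- PI) PI 0).
  { apply (is_RInt_derive_periodic (fun t => polU_t r t * cos t + polU r t * sin t)).
    - intros t; eapply is_derive_eq.
      + apply is_derive_R_plus; apply is_derive_R_mult;
          [apply is_derive_polU_tt, Hr | apply is_derive_cos | apply is_derive_polU_t, Hr
          | apply is_derive_sin].
      + R_eq; ring.
    - intros t; apply continuous_R_mult; [apply continuous_R_plus | apply continuous_cos];
        [apply continuous_polU_tt_slice | apply continuous_polU_slice]; exact Hr.
    - destruct (polU_periodic r) as [E1 E2]; rewrite E1, E2, cos_neg, sin_neg, sin_PI; ring. }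
  apply (is_RInt_R_unique
           (fun t => r ^ 2 * (polU_rr r t * cos t) + r * (polU_r r t * cos t) - polU r t * cos t)
           (- PI) PI).
  - apply is_RInt_R_minus; [apply is_RInt_R_plus; apply is_RInt_R_scal |]; assumption.
  - apply (is_RInt_ext (fun t => - 1 * ((polU_tt r t + polU r t) * cos t))).
    + intros t _; assert (L := polU_laplace r Hr t); nra.
    + replace 0 with (- 1 * 0) by ring; apply is_RInt_R_scal, Itt.
Qed.

Section Derivatives.
Variable r : R.
Hypothesis Hr : r ^ 2 < 1.

Lemma is_derive_fourier_0 : is_derive fourier_0 r (fourier_0_r r).
Proof.
  unfold fourier_0, fourier_0_r.
  apply (is_derive_RInt_param_sq_lt_1 polU polU_r _ _ r Hr).
  - intros y t Hy; apply is_derive_polU_r, Hy.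
  - intros t; apply (continuous_polU_r (r, t)), Hr.
  - intros y Hy; apply ex_RInt_R_continuous, continuous_polU_slice, Hy.
Qed.

Lemma is_derive_fourier_0_r : is_derive fourier_0_r r (fourier_0_rr r).
Proof.
  unfold fourier_0_r, fourier_0_rr.
  apply (is_derive_RInt_param_sq_lt_1 polU_r polU_rr _ _ r Hr).
  - intros y t Hy; apply is_derive_polU_rr, Hy.
  - intros t; apply (continuous_polU_rr (r, t)), Hr.
  - intros y Hy; apply ex_RInt_R_continuous, continuous_polU_r_slice, Hy.
Qed.

Lemma is_derive_fourier_cos : is_derive fourier_cos r (fourier_cos_r r).
Proof.
  unfold fourier_cos, fourier_cos_r.
  apply (is_derive_RInt_param_sq_lt_1 (fun r t => polU r t * cos t)
           (fun r t => polU_r r t * cos t) _ _ r Hr).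
  - intros y t Hy; eapply is_derive_eq;
      [apply is_derive_R_mult; [apply is_derive_polU_r, Hy | apply is_derive_R_const] | R_eq; ring].
  - intros t; apply continuous_R_mult;
      [apply (continuous_polU_r (r, t)), Hr | apply continuous_R_cos, continuous_R2_snd].
  - intros y Hy; apply ex_RInt_R_continuous, continuous_mult_cos, continuous_polU_slice, Hy.
Qed.

Lemma is_derive_fourier_cos_r : is_derive fourier_cos_r r (fourier_cos_rr r).
Proof.
  unfold fourier_cos_r, fourier_cos_rr.
  apply (is_derive_RInt_param_sq_lt_1 (fun r t => polU_r r t * cos t)
           (fun r t => polU_rr r t * cos t) _ _ r Hr).
  - intros y t Hy; eapply is_derive_eq;
      [apply is_derive_R_mult; [apply is_derive_polU_rr, Hy | apply is_derive_R_const]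
      | R_eq; ring].
  - intros t; apply continuous_R_mult;
      [apply (continuous_polU_rr (r, t)), Hr | apply continuous_R_cos, continuous_R2_snd].
  - intros y Hy; apply ex_RInt_R_continuous, continuous_mult_cos, continuous_polU_r_slice, Hy.
Qed.

End Derivatives.

Lemma polU_at_0 t : polU 0 t = g a b.
Proof.
  destruct (mob_at_0 a b (rot_re c s t) (rot_im c s t)) as [A [B _]].
  unfold polU, polX, polY; rewrite A, B; reflexivity.
Qed.

Lemma polU_r_at_0 t :
  polU_r 0 t = disk_defect a b * (px g a b * rot_re c s t + py g a b * rot_im c s t).
Proof.
  destruct (mob_at_0 a b (rot_re c s t) (rot_im c s t)) as [A [B [C D]]].
  unfold polU_r, polX, polY, polX_r, polY_r; rewrite A, B, C, D; ring.
Qed.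

Lemma fourier_0_at_0 : fourier_0 0 = 2 * PI * g a b.
Proof.
  unfold fourier_0; rewrite (RInt_ext _ (fun _ => g a b)) by (intros; apply polU_at_0).
  rewrite RInt_const; unfold scal; simpl; unfold mult; simpl; ring.
Qed.

Lemma fourier_cos_at_0 : fourier_cos 0 = 0.
Proof.
  unfold fourier_cos; rewrite (RInt_ext _ (fun t => g a b * cos t))
    by (intros; rewrite polU_at_0; reflexivity).
  rewrite <- (Rmult_0_r (g a b)).
  apply is_RInt_unique, is_RInt_R_scal, is_RInt_cos_period.
Qed.

Lemma fourier_cos_r_at_0 :
  fourier_cos_r 0 = disk_defect a b * PI * (px g a b * c + py g a b * s).
Proof.
  unfold fourier_cos_r; apply is_RInt_unique.
  set (d := disk_defect a b); set (ux := px g a b); set (uy := py g a b).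
  replace (d * PI * (ux * c + uy * s)) with (d * (ux * c + uy * s) * PI + d * (uy * c - ux * s) * 0)
    by ring.
  eapply is_RInt_ext; [| apply is_RInt_R_plus; apply is_RInt_R_scal;
                         [apply is_RInt_cos_sq | apply is_RInt_sin_cos]].
  intros t _; R_eq; rewrite polU_r_at_0; unfold rot_re, rot_im; fold d ux uy; ring.
Qed.

(* By the Euler equations fourier_0 is constant and fourier_cos is linear in r, so the
   bathtub bound on the circle of radius r bounds r * fourier_cos_r 0; then let r tend to 1. *)
Lemma harmonic_directional_bound : (forall x y, in_disk x y -> - 1 < g x y < 1) ->
  disk_defect a b * PI * (px g a b * c + py g a b * s) <= 4 * cos (PI / 2 * g a b).
Proof.
  intros Hrange; rewrite <- fourier_cos_r_at_0.
  apply le_of_forall_lt_1_mult_le; intros r Hr.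
  assert (Hr2 : r ^ 2 < 1) by nra.
  rewrite <- (euler1_linear fourier_cos fourier_cos_r fourier_cos_rr
               is_derive_fourier_cos is_derive_fourier_cos_r fourier_cos_euler fourier_cos_at_0
               r Hr).
  apply bathtub.
  - apply continuous_polU_slice, Hr2.
  - intros t; destruct (Hrange _ _ (polXY_in_disk r t Hr2)); unfold polU; lra.
  - rewrite <- fourier_0_at_0.
    rewrite <- (euler0_const fourier_0 fourier_0_r fourier_0_rr
                 is_derive_fourier_0 is_derive_fourier_0_r fourier_0_euler r ltac:(lra)).
    apply is_RInt_R_RInt, continuous_polU_slice, Hr2.
  - apply Hrange; unfold in_disk; nra.
Qed.

End Polar.

(** * The Schwarz lemma for harmonic maps into the strip *)

Lemma strip_cos_pos u : - 1 < u < 1 -> 0 < cos (PI / 2 * u).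
Proof. intros H; assert (HP := PI_RGT_0); apply cos_gt_0; nra. Qed.

Lemma harmonic_gradient_bound (g : R -> R -> R) :
  harmonic_real_on unit_disk g -> (forall x y, in_disk x y -> - 1 < g x y < 1) ->
  forall a b, a ^ 2 + b ^ 2 < 1 ->
  (1 - a ^ 2 - b ^ 2) * PI * sqrt (px g a b ^ 2 + py g a b ^ 2) <= 4 * cos (PI / 2 * g a b).
Proof.
  intros Hg Hrange a b Hab.
  set (ux := px g a b); set (uy := py g a b).
  assert (Hq : 0 <= ux ^ 2 + uy ^ 2) by nra.
  assert (Hc := strip_cos_pos (g a b) (Hrange a b ltac:(unfold in_disk; nra))).
  destruct (Req_dec (ux ^ 2 + uy ^ 2) 0) as [E | Hne]; [rewrite E, sqrt_0; lra |].
  set (n := sqrt (ux ^ 2 + uy ^ 2)).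
  assert (Hn : 0 < n) by (apply sqrt_lt_R0; lra).
  assert (Hn2 : n * n = ux ^ 2 + uy ^ 2) by (apply sqrt_sqrt; lra).
  (* apply the directional bound along the gradient *)
  assert (Hcs : (ux / n) ^ 2 + (uy / n) ^ 2 = 1).
  { replace ((ux / n) ^ 2 + (uy / n) ^ 2) with ((ux ^ 2 + uy ^ 2) / (n * n)) by (field; lra).
    rewrite Hn2; field; lra. }
  assert (G := harmonic_directional_bound g Hg a b (ux / n) (uy / n) Hab Hcs Hrange).
  unfold disk_defect in G; fold ux uy in G.
  replace (ux * (ux / n) + uy * (uy / n)) with n in G; [exact G |].
  replace (ux * (ux / n) + uy * (uy / n)) with ((ux ^ 2 + uy ^ 2) / n) by (field; lra).
  rewrite <- Hn2; field; lra.
Qed.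

Lemma f_z_decomp (f : C -> C) z :
  f_z f z = Cplus (px (ReF f) (fst z) (snd z), - py (ReF f) (fst z) (snd z))
                  (Copp (Cconj (f_zbar f z))).
Proof.
  unfold f_z, f_zbar, Cplus, Copp, Cconj; cbn [fst snd].
  apply injective_projections; cbn [fst snd]; field.
Qed.

Lemma Cmod_f_z_le (f : C -> C) z :
  Cmod (f_z f z) <= sqrt (px (ReF f) (fst z) (snd z) ^ 2 + py (ReF f) (fst z) (snd z) ^ 2)
                    + Cmod (f_zbar f z).
Proof.
  rewrite f_z_decomp; eapply Rle_trans; [apply Cmod_triangle |].
  rewrite Cmod_opp, Cmod_conj; unfold Cmod at 1; cbn [fst snd].
  replace ((- py (ReF f) (fst z) (snd z)) ^ 2) with (py (ReF f) (fst z) (snd z) ^ 2) by ring.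
  lra.
Qed.

Lemma dilatation_sum_le (A B K n : R) :
  0 <= B < A -> (A + B) / (A - B) <= K -> A <= n + B -> A + B <= K * n.
Proof.
  intros HAB HK Hn.
  apply (Rmult_le_compat_r (A - B)) in HK; [| lra].
  unfold Rdiv in HK; rewrite Rmult_assoc, Rinv_l, Rmult_1_r in HK by lra.
  assert (0 <= K) by nra.
  nra.
Qed.

Lemma Cmod_sqr_pair x y : Cmod (x, y) ^ 2 = x ^ 2 + y ^ 2.
Proof. unfold Cmod; cbn [fst snd]; rewrite pow2_sqrt; nra. Qed.

Lemma HQR_density_bound K f : HQR K unit_disk strip f -> forall z, unit_disk z ->
  rho_S (f z) * (Cmod (f_z f z) + Cmod (f_zbar f z)) <= K * rho_U z.
Proof.
  intros [Hmap [[Hu _] Hdil]] [x y] Hz.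
  assert (Hrange : forall x y, in_disk x y -> - 1 < ReF f x y < 1)
    by (intros x' y' H; apply (Hmap (x', y')), unit_disk_pair, H).
  assert (Hxy := proj1 (unit_disk_pair x y) Hz); unfold in_disk in Hxy.
  assert (G := harmonic_gradient_bound (ReF f) Hu Hrange x y ltac:(nra)).
  destruct (Hdil (x, y) Hz) as [HAB HK].
  assert (Hsum := dilatation_sum_le _ _ _ _ (conj (Cmod_ge_0 _) HAB) HK (Cmod_f_z_le f (x, y))).
  cbn [fst snd] in Hsum.
  set (n := sqrt (px (ReF f) x y ^ 2 + py (ReF f) x y ^ 2)) in *.
  assert (Hn : 0 <= n) by apply sqrt_pos.
  assert (Hc := strip_cos_pos _ (Hrange x y Hxy)).
  assert (HPI := PI_RGT_0).
  unfold rho_S, rho_U; rewrite Cmod_sqr_pair; change (fst (f (x, y))) with (ReF f x y).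
  set (cv := cos (PI / 2 * ReF f x y)) in *.
  replace (1 - x ^ 2 - y ^ 2) with (1 - (x ^ 2 + y ^ 2)) in G by ring.
  set (k := 1 - (x ^ 2 + y ^ 2)) in *.
  assert (Hk : 0 < k) by (unfold k; nra).
  apply (Rmult_le_reg_r (cv * k)); [nra |].
  replace (PI / 2 / cv * (Cmod (f_z f (x, y)) + Cmod (f_zbar f (x, y))) * (cv * k))
    with (PI / 2 * k * (Cmod (f_z f (x, y)) + Cmod (f_zbar f (x, y)))) by (field; lra).
  replace (K * (2 / k) * (cv * k)) with (2 * K * cv) by (field; lra).
  assert (HB0 := Cmod_ge_0 (f_zbar f (x, y))).
  assert (0 <= K) by nra.
  apply Rle_trans with (PI / 2 * k * (K * n)); [apply Rmult_le_compat_l; nra |].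
  replace (PI / 2 * k * (K * n)) with (K / 2 * (k * PI * n)) by field.
  apply Rle_trans with (K / 2 * (4 * cv)); [apply Rmult_le_compat_l; lra | right; field].
Qed.

(** * Images of curves and their hyperbolic lengths *)

(* smoothstep maps the neighbourhood (-1/2, 3/2) of [0, 1] into [0, 1] and fixes 0 and 1:
   reparametrising by it makes f o gam differentiable up to the endpoints, although the
   curve gam is only known to stay in the disk on [0, 1]. *)
Definition smoothstep (t : R) : R := t ^ 2 * (3 - 2 * t).
Definition smoothstep_deriv (t : R) : R := 6 * t * (1 - t).

Lemma smoothstep_range t : - 1 / 2 <= t <= 3 / 2 -> 0 <= smoothstep t <= 1.
Proof.
  intros H; unfold smoothstep; split.
  - apply Rmult_le_pos; [apply pow2_ge_0 | lra].
  - assert (0 <= (1 - t) ^ 2 * (1 + 2 * t)) by (apply Rmult_le_pos; [apply pow2_ge_0 | lra]).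
    nra.
Qed.

Lemma is_derive_smoothstep t : is_derive smoothstep t (smoothstep_deriv t).
Proof.
  unfold smoothstep, smoothstep_deriv; eapply is_derive_eq; [auto_derive; auto | R_eq; ring].
Qed.

Lemma smoothstep_0 : smoothstep 0 = 0.
Proof. unfold smoothstep; ring. Qed.

Lemma smoothstep_1 : smoothstep 1 = 1.
Proof. unfold smoothstep; ring. Qed.

Lemma continuous_smoothstep t : continuous smoothstep t.
Proof. apply continuous_ex_derive; eexists; apply is_derive_smoothstep. Qed.

Lemma continuous_smoothstep_deriv t : continuous smoothstep_deriv t.
Proof. unfold smoothstep_deriv; auto_cont. Qed.

Lemma near_unit_interval_locally t : 0 <= t <= 1 -> locally t (fun s => - 1 / 2 < s < 3 / 2).
Proof. intros H; apply (locally_interval _ t (- 1 / 2) (3 / 2)); simpl; auto; lra. Qed.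

Lemma ReF_pair (f : C -> C) z : ReF f (fst z) (snd z) = fst (f z).
Proof. unfold ReF; rewrite <- surjective_pairing; reflexivity. Qed.

Lemma ImF_pair (f : C -> C) z : ImF f (fst z) (snd z) = snd (f z).
Proof. unfold ImF; rewrite <- surjective_pairing; reflexivity. Qed.

Section ImageCurve.
Variables (K : R) (f : C -> C).
Hypothesis Hf : HQR K unit_disk strip f.
Variables (gam : R -> C) (z1 z2 : C).
Hypothesis Hgam : C1_curve unit_disk gam z1 z2.

Let Hu : harmonic_real_on unit_disk (ReF f) := proj1 (proj1 (proj2 Hf)).
Let Hv : harmonic_real_on unit_disk (ImF f) := proj2 (proj1 (proj2 Hf)).

Definition image_curve t := f (gam (smoothstep t)).

Definition reparam_re t := fst (gam (smoothstep t)).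
Definition reparam_im t := snd (gam (smoothstep t)).
Definition reparam_re_d t := Derive (fun r => fst (gam r)) (smoothstep t) * smoothstep_deriv t.
Definition reparam_im_d t := Derive (fun r => snd (gam r)) (smoothstep t) * smoothstep_deriv t.
Definition image_re_d t :=
  px (ReF f) (reparam_re t) (reparam_im t) * reparam_re_d t
  + py (ReF f) (reparam_re t) (reparam_im t) * reparam_im_d t.
Definition image_im_d t :=
  px (ImF f) (reparam_re t) (reparam_im t) * reparam_re_d t
  + py (ImF f) (reparam_re t) (reparam_im t) * reparam_im_d t.

Section NearUnitInterval.
Variable t : R.
Hypothesis Ht : - 1 / 2 < t < 3 / 2.
Let Hs : 0 <= smoothstep t <= 1 :=
  smoothstep_range t (conj (Rlt_le _ _ (proj1 Ht)) (Rlt_le _ _ (proj2 Ht))).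
Let Hgam_s := proj2 (proj2 (proj2 Hgam)) (smoothstep t) Hs.

Lemma reparam_in_disk : in_disk (reparam_re t) (reparam_im t).
Proof.
  apply unit_disk_pair; unfold reparam_re, reparam_im; rewrite <- surjective_pairing.
  apply (proj1 (proj2 (proj2 Hgam))), Hs.
Qed.

Lemma is_derive_reparam_re : is_derive reparam_re t (reparam_re_d t).
Proof.
  unfold reparam_re, reparam_re_d; eapply is_derive_eq.
  - apply (is_derive_comp (fun r => fst (gam r)) smoothstep);
      [apply Derive_correct, Hgam_s | apply is_derive_smoothstep].
  - apply Rmult_comm.
Qed.

Lemma is_derive_reparam_im : is_derive reparam_im t (reparam_im_d t).
Proof.
  unfold reparam_im, reparam_im_d; eapply is_derive_eq.
  - apply (is_derive_comp (fun r => snd (gam r)) smoothstep);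
      [apply Derive_correct, Hgam_s | apply is_derive_smoothstep].
  - apply Rmult_comm.
Qed.

Lemma is_derive_image_re : is_derive (fun t => fst (image_curve t)) t (image_re_d t).
Proof.
  eapply is_derive_ext; [intros r; apply (ReF_pair f (gam (smoothstep r))) |].
  apply (is_derive_comp_2d (ReF f) reparam_re reparam_im);
    [apply (harmonic_differentiable _ Hu), reparam_in_disk
    | apply is_derive_reparam_re | apply is_derive_reparam_im].
Qed.

Lemma is_derive_image_im : is_derive (fun t => snd (image_curve t)) t (image_im_d t).
Proof.
  eapply is_derive_ext; [intros r; apply (ImF_pair f (gam (smoothstep r))) |].
  apply (is_derive_comp_2d (ImF f) reparam_re reparam_im);
    [apply (harmonic_differentiable _ Hv), reparam_in_disk
    | apply is_derive_reparam_re | apply is_derive_reparam_im].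
Qed.

Lemma continuous_image_d : continuous image_re_d t /\ continuous image_im_d t.
Proof.
  assert (Hcomp : forall h, continuous_on_disk h ->
                   continuous (fun t => h (reparam_re t) (reparam_im t)) t).
  { intros h Hh; apply (continuous_comp_2 reparam_re reparam_im h);
      [apply continuous_ex_derive; eexists; apply is_derive_reparam_re
      | apply continuous_ex_derive; eexists; apply is_derive_reparam_im
      | apply Hh, reparam_in_disk]. }
  assert (Hd : forall h : R -> R, continuous (Derive h) (smoothstep t) ->
                 continuous (fun t => Derive h (smoothstep t) * smoothstep_deriv t) t).
  { intros h Hh; apply continuous_R_mult; [| apply continuous_smoothstep_deriv].
    apply (continuous_comp smoothstep (Derive h)); [apply continuous_smoothstep | exact Hh]. }
  destruct Hgam_s as [_ [_ [C1 C2]]].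
  unfold image_re_d, image_im_d, reparam_re_d, reparam_im_d.
  split; auto_cont_step; auto_cont_step.
  all: match goal with
       | |- continuous (fun t => Derive ?h (smoothstep t) * _) _ => apply (Hd h); assumption
       | |- continuous (fun t => ?h (reparam_re t) (reparam_im t)) _ =>
           apply (Hcomp h); first [harmonic_continuous Hu | harmonic_continuous Hv]
       end.
Qed.

End NearUnitInterval.

Lemma Derive_image_re t : - 1 / 2 < t < 3 / 2 ->
  Derive (fun r => fst (image_curve r)) t = image_re_d t.
Proof. intros H; apply is_derive_unique, is_derive_image_re, H. Qed.

Lemma Derive_image_im t : - 1 / 2 < t < 3 / 2 ->
  Derive (fun r => snd (image_curve r)) t = image_im_d t.
Proof. intros H; apply is_derive_unique, is_derive_image_im, H. Qed.

Lemma continuous_Derive_image t : 0 <= t <= 1 ->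
  continuous (fun s => Derive (fun r => fst (image_curve r)) s) t /\
  continuous (fun s => Derive (fun r => snd (image_curve r)) s) t.
Proof.
  intros Ht; destruct (continuous_image_d t ltac:(lra)) as [Cre Cim].
  split; [apply (continuous_ext_loc _ image_re_d) | apply (continuous_ext_loc _ image_im_d)];
    try assumption; eapply filter_imp; try apply near_unit_interval_locally, Ht;
    intros y Hy; symmetry; [apply Derive_image_re | apply Derive_image_im]; exact Hy.
Qed.

Lemma image_curve_C1 : C1_curve strip image_curve (f z1) (f z2).
Proof.
  destruct Hgam as [H0 [H1 [HD _]]].
  split; [| split; [| split]].
  - unfold image_curve; rewrite smoothstep_0, H0; reflexivity.
  - unfold image_curve; rewrite smoothstep_1, H1; reflexivity.
  - intros t Ht; apply (proj1 Hf), HD, smoothstep_range; lra.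
  - intros t Ht; split; [| split; [| split]].
    + eexists; apply is_derive_image_re; lra.
    + eexists; apply is_derive_image_im; lra.
    + exact (proj1 (continuous_Derive_image t Ht)).
    + exact (proj2 (continuous_Derive_image t Ht)).
Qed.

Definition length_density_U s := rho_U (gam s) * Cmod (curve_deriv gam s).
Definition length_density_S t := rho_S (image_curve t) * Cmod (curve_deriv image_curve t).

Lemma continuous_length_density_U s : 0 <= s <= 1 -> continuous length_density_U s.
Proof.
  intros Hs; destruct Hgam as [_ [_ [HD HC]]]; destruct (HC s Hs) as [E1 [E2 [C1 C2]]].
  apply continuous_ex_derive in E1; apply continuous_ex_derive in E2.
  assert (Hne : 1 - Cmod (gam s) ^ 2 <> 0)
    by (assert (Hd := HD s Hs); assert (0 <= Cmod (gam s)) by apply Cmod_ge_0;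
        unfold unit_disk in Hd; nra).
  unfold length_density_U, rho_U, curve_deriv, Cmod; cbn [fst snd].
  auto_cont; try exact Hne; auto.
Qed.

Lemma image_curve_in_strip t : 0 <= t <= 1 -> - 1 < fst (image_curve t) < 1.
Proof.
  intros H; destruct Hgam as [_ [_ [HD _]]].
  apply (proj1 Hf (gam (smoothstep t))), HD, smoothstep_range; lra.
Qed.

Lemma continuous_length_density_S t : 0 <= t <= 1 -> continuous length_density_S t.
Proof.
  intros Ht.
  assert (C1 : continuous (fun r => fst (image_curve r)) t)
    by (apply continuous_ex_derive; eexists; apply is_derive_image_re; lra).
  assert (Hcos := strip_cos_pos _ (image_curve_in_strip t Ht)).
  destruct (continuous_Derive_image t Ht) as [Cre Cim].
  unfold length_density_S, rho_S, curve_deriv, Cmod; cbn [fst snd].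
  auto_cont; try assumption; lra.
Qed.

Lemma length_density_le t : 0 < t < 1 ->
  length_density_S t <= K * (smoothstep_deriv t * length_density_U (smoothstep t)).
Proof.
  intros Ht.
  set (q := gam (smoothstep t)); set (W := curve_deriv gam (smoothstep t)).
  set (A := Cmod (f_z f q)); set (B := Cmod (f_zbar f q)).
  (* chain rule in Wirtinger form *)
  assert (HZ : curve_deriv image_curve t
               = Cmult (Cplus (Cmult (f_z f q) W) (Cmult (f_zbar f q) (Cconj W)))
                       (RtoC (smoothstep_deriv t))).
  { unfold curve_deriv at 1; rewrite Derive_image_re, Derive_image_im by lra.
    unfold image_re_d, image_im_d, reparam_re_d, reparam_im_d, reparam_re, reparam_im, f_z, f_zbar,
      Cmult, Cplus, Cconj, RtoC, W, curve_deriv.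
    fold q; apply injective_projections; cbn [fst snd]; field. }
  assert (Hds : 0 <= smoothstep_deriv t) by (unfold smoothstep_deriv; nra).
  assert (HT : Cmod (Cplus (Cmult (f_z f q) W) (Cmult (f_zbar f q) (Cconj W))) <= (A + B) * Cmod W).
  { eapply Rle_trans; [apply Cmod_triangle |]; rewrite !Cmod_mult, Cmod_conj; fold A B; lra. }
  assert (Hq : unit_disk q) by (apply (proj1 (proj2 (proj2 Hgam))), smoothstep_range; lra).
  assert (Hdens := HQR_density_bound K f Hf q Hq); fold A B in Hdens.
  assert (HrhoS : 0 <= rho_S (f q)).
  { assert (Hc := strip_cos_pos _ (image_curve_in_strip t ltac:(lra))).
    unfold image_curve in Hc; fold q in Hc.
    assert (HP := PI_RGT_0); unfold rho_S; apply Rdiv_le_0_compat; lra. }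
  assert (HW : 0 <= Cmod W) by apply Cmod_ge_0.
  unfold length_density_S, length_density_U; rewrite HZ; fold q W.
  unfold image_curve; fold q.
  rewrite Cmod_mult, Cmod_R, (Rabs_pos_eq _ Hds).
  apply Rle_trans with (rho_S (f q) * (A + B) * (Cmod W * smoothstep_deriv t)).
  - rewrite Rmult_assoc; apply Rmult_le_compat_l; [exact HrhoS |].
    replace ((A + B) * (Cmod W * smoothstep_deriv t))
      with ((A + B) * Cmod W * smoothstep_deriv t) by ring.
    apply Rmult_le_compat_r; assumption.
  - replace (K * (smoothstep_deriv t * (rho_U q * Cmod W)))
      with (K * rho_U q * (Cmod W * smoothstep_deriv t)) by ring.
    apply Rmult_le_compat_r; [nra | exact Hdens].
Qed.

Lemma image_curve_length_le : curve_length rho_S image_curve <= K * curve_length rho_U gam.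
Proof.
  change (RInt length_density_S 0 1 <= K * RInt length_density_U 0 1).
  assert (Hcomp : forall t, 0 <= t <= 1 ->
            continuous (fun t => smoothstep_deriv t * length_density_U (smoothstep t)) t).
  { intros t Ht; apply continuous_R_mult; [apply continuous_smoothstep_deriv |].
    apply (continuous_comp smoothstep length_density_U);
      [apply continuous_smoothstep | apply continuous_length_density_U, smoothstep_range; lra]. }
  assert (Hsubst : RInt length_density_U 0 1
                   = RInt (fun t => smoothstep_deriv t * length_density_U (smoothstep t)) 0 1).
  { rewrite <- smoothstep_0 at 1; rewrite <- smoothstep_1 at 1; symmetry.
    apply (RInt_comp (V := R_CompleteNormedModule) length_density_U smoothstep smoothstep_deriv).
    - intros x Hx; rewrite Rmin_left, Rmax_right in Hx by lra.
      apply continuous_length_density_U, smoothstep_range; lra.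
    - intros x Hx; split; [apply is_derive_smoothstep | apply continuous_smoothstep_deriv]. }
  rewrite Hsubst.
  assert (Ex : ex_RInt (fun t => smoothstep_deriv t * length_density_U (smoothstep t)) 0 1).
  { apply (ex_RInt_continuous (V := R_CompleteNormedModule)); intros z Hz.
    rewrite Rmin_left, Rmax_right in Hz by lra; apply Hcomp, Hz. }
  assert (I := is_RInt_R_scal _ _ _ _ K (RInt_correct (V := R_CompleteNormedModule) _ _ _ Ex)).
  rewrite <- (is_RInt_unique _ _ _ _ I).
  apply RInt_le; [lra | | eexists; exact I | intros x Hx; apply length_density_le, Hx].
  apply (ex_RInt_continuous (V := R_CompleteNormedModule)); intros z Hz.
  rewrite Rmin_left, Rmax_right in Hz by lra; apply continuous_length_density_S, Hz.
Qed.

End ImageCurve.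

Lemma Rbar_mult_pos_p_infty K : 0 < K -> Rbar_mult K p_infty = p_infty.
Proof.
  intros HK; unfold Rbar_mult, Rbar_mult'.
  destruct (Rle_dec 0 K) as [H |]; [| lra].
  destruct (Rle_lt_or_eq_dec 0 K H); [reflexivity | lra].
Qed.

Lemma Rbar_le_mult_Glb_Rbar (E : R -> Prop) K (l : Rbar) : 0 < K ->
  (forall L, E L -> Rbar_le l (K * L)) -> Rbar_le l (Rbar_mult K (Glb_Rbar E)).
Proof.
  intros HK H; destruct (Glb_Rbar_correct E) as [_ Hglb].
  destruct l as [s | |]; [| | exact I].
  - assert (Hlb : Rbar_le (s / K) (Glb_Rbar E)).
    { apply Hglb; intros L HL; specialize (H L HL); simpl in *.
      apply Rle_div_l; [exact HK | lra]. }
    destruct (Glb_Rbar E) as [u | |].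
    + simpl in Hlb |- *; apply Rle_div_l in Hlb; [lra | exact HK].
    + rewrite Rbar_mult_pos_p_infty by exact HK; exact I.
    + destruct Hlb.
  - assert (Hp : Glb_Rbar E = p_infty).
    { apply Rbar_le_antisym; [destruct (Glb_Rbar E); exact I |].
      apply Hglb; intros L HL; exact (H L HL). }
    rewrite Hp, Rbar_mult_pos_p_infty by exact HK; exact I.
Qed.

Lemma Glb_Rbar_le_mult (ES EU : R -> Prop) K : 0 < K ->
  (forall L, EU L -> exists L', ES L' /\ L' <= K * L) ->
  Rbar_le (Glb_Rbar ES) (Rbar_mult K (Glb_Rbar EU)).
Proof.
  intros HK H; apply Rbar_le_mult_Glb_Rbar; [exact HK |].
  intros L HL; destruct (H L HL) as [L' [HL' Hle]].
  apply Rbar_le_trans with (Finite L'); [apply (proj1 (Glb_Rbar_correct ES)), HL' | exact Hle].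
Qed.

Theorem lemma4 (K : R) (f : C -> C) :
  1 <= K -> HQR K unit_disk strip f ->
  forall z1 z2 : C, unit_disk z1 -> unit_disk z2 ->
    Rbar_le (d_S (f z1) (f z2)) (Rbar_mult K (d_U z1 z2)).
Proof.
  intros HK Hf z1 z2 _ _; unfold d_S, d_U, hdist.
  apply Glb_Rbar_le_mult; [lra |].
  intros L [gam [Hgam ->]].
  exists (curve_length rho_S (image_curve f gam)); split.
  - exists (image_curve f gam); split; [exact (image_curve_C1 K f Hf gam z1 z2 Hgam) | reflexivity].
  - exact (image_curve_length_le K f Hf gam z1 z2 Hgam).
Qed.
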